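(* Let $n\geqslant0$, $q=3^{2n+1}$, $A=\{\alpha-\alpha^{3^{n+1}}:\alpha\in\mathbb{F}_q\}$, and let $T\subseteq\mathbb{F}_q^\times$. Then $$\dim_{\mathbb{F}_3}\Big(\bigcap_{t\in T}tA\Big)+\dim_{\mathbb{F}_3}\big(\mathrm{span}_{\mathbb{F}_3}(T^{-1})\big)=2n+1.$$
   Context: For $t\in\mathbb{F}_q$, $tA=\{ta:a\in A\}$, an $\mathbb{F}_3$-subspace of $\mathbb{F}_q$; $T^{-1}=\{t^{-1}:t\in T\}$ and $\mathrm{span}_{\mathbb{F}_3}(T^{-1})$ is the $\mathbb{F}_3$-subspace it spans. An intersection over an empty index set is $\mathbb{F}_q$. *)

From mathcomp Require Import all_boot all_order all_algebra all_field.
Set Implicit Arguments. Unset Strict Implicit. Unset Printing Implicit Defensive.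
Import GRing.Theory.
Local Open Scope ring_scope.

Definition Aset (F : finFieldType) (n : nat) : {set F} :=
  [set a - a ^+ (3 ^ n.+1)%N | a : F].

Definition scale_set (F : finFieldType) (t : F) (S : {set F}) : {set F} :=
  [set t * a | a in S].

Definition inv_set (F : finFieldType) (T : {set F}) : {set F} :=
  [set t^-1 | t in T].

(* F is viewed as an 'F_3-vector space via pPrimeCharType (needs char F = 3).
   F3span S = the 'F_3-subspace of F spanned by S; for S already an
   'F_3-subspace this is S itself. *)
Definition F3span (F : finFieldType) (h3 : 3%N \in [pchar F]) (S : {set F})
  : {vspace pPrimeCharType h3} :=
  <<(enum S : seq (pPrimeCharType h3))>>%VS.

From HB Require Import structures.
From mathcomp Require Import all_boot all_order all_algebra all_field.
From mathcomp Require Import zify.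
Set Implicit Arguments. Unset Strict Implicit. Unset Printing Implicit Defensive.
Import GRing.Theory.
Local Open Scope ring_scope.

(* The map a |-> a - a^(3^(n+1)) is F_3-linear with kernel F_3: since
   2(n+1) = 1 mod 2n+1, a fixed point of x |-> x^(3^(n+1)) is fixed by
   x |-> x^3.  Hence A is an F_3-hyperplane of F_q.  The intersection of
   the tA is the colon space (A : W) = {x | x W <= A} of W = span(T^-1), and
   for any hyperplane A of a field L one has dim (A : W) + dim W = dim L:
   (A : <[w]>) contains the hyperplane w^-1 A, so intersecting over a basis
   gives dim (A : W) >= dim L - dim W, while
   (A : W) :&: (A : W^C) = (A : L) = 0 bounds dim (A : W) + dim (A : W^C). *)

Section ColonSpace.

Variables (K : fieldType) (L : fieldExtType K).
Implicit Types (A W : {vspace L}) (x w : L) (s : seq L).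

Definition colonv A W : {vspace L} :=
  (\bigcap_(i < \dim W) amulr (vbasis W)`_i @^-1: A)%VS.

Lemma subv_lpreim_amullP A W x :
  reflect {in W, forall w, x * w \in A} (W <= amull x @^-1: A)%VS.
Proof.
apply: (iffP subvP) => WA w /WA; first by rewrite -memv_preim lfunE.
by rewrite -memv_preim lfunE.
Qed.

Lemma colonvP A W x : reflect {in W, forall w, x * w \in A} (x \in colonv A W).
Proof.
apply: (iffP idP) => [xW | xWA].
  apply/subv_lpreim_amullP; rewrite -(span_basis (vbasisP W)).
  apply/span_subvP => _ /(nthP 0)[i ltiW <-]; rewrite size_tuple in ltiW.
  have := subvP (bigcapv_inf (Ordinal ltiW) isT (subvv _)) x xW.
  by rewrite -!memv_preim !lfunE.
rewrite memvE; apply/subv_bigcapP => i _; rewrite -memvE -memv_preim lfunE.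
exact/xWA/vbasis_mem/memt_nth.
Qed.

Lemma colonv_spanP A s x :
  reflect {in s, forall w, x * w \in A} (x \in colonv A <<s>>).
Proof.
apply: (iffP (colonvP _ _ _)) => [xA w sw | xA]; first exact/xA/memv_span.
by apply/subv_lpreim_amullP/span_subvP => w sw; rewrite -memv_preim lfunE xA.
Qed.

Lemma colonv0 A : colonv A 0 = fullv.
Proof.
apply/vspaceP => x; rewrite memvf; apply/colonvP => w.
by rewrite memv0 => /eqP->; rewrite mulr0 mem0v.
Qed.

Lemma colonvD A W1 W2 :
  colonv A (W1 + W2) = (colonv A W1 :&: colonv A W2)%VS.
Proof.
apply/vspaceP => x; rewrite memv_cap.
apply/colonvP/andP => [xA | [/colonvP xA1 /colonvP xA2]].
  split; apply/colonvP => w Ww; apply: xA.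
    exact: subvP (addvSl W1 W2) w Ww.
  exact: subvP (addvSr W1 W2) w Ww.
move=> _ /memv_addP[w1 Ww1 [w2 Ww2 ->]].
by rewrite mulrDr; apply: memvD; [apply: xA1 | apply: xA2].
Qed.

Lemma dimv_colonv_line A w : (\dim A <= \dim (colonv A <[w]>))%N.
Proof.
have [-> | nz_w] := eqVneq w 0.
  suff -> : colonv A <[0]> = fullv by apply/dimvS/subvf.
  apply/vspaceP => x; rewrite memvf; apply/colonvP => _ /vlineP[k ->].
  by rewrite scaler0 mulr0 mem0v.
have unit_winv : w^-1 \is a GRing.unit by rewrite unitfE invr_eq0.
rewrite -(dim_cosetv_unit A unit_winv); apply/dimvS/subvP.
move=> _ /memv_cosetP[a Aa ->]; apply/colonvP => _ /vlineP[k ->].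
by rewrite -scalerAr mulfVK // memvZ.
Qed.

Variable A : {vspace L}.
Hypothesis dim_hyperplane : (\dim A).+1 = \dim {:L}.

Lemma colonvf : colonv A fullv = 0%VS.
Proof.
apply/vspaceP => x; rewrite memv0; apply/idP/eqP => [/colonvP xA | ->]; last first.
  exact: mem0v.
apply: contra_eq (dimvS (subvf A)) => nz_x.
have /dimvS : (fullv <= A)%VS.
  by apply/subvP => z _; rewrite -(mulVKf nz_x z) xA ?memvf.
by rewrite -dim_hyperplane ltnn.
Qed.

Lemma dimv_colonv_span s : (\dim {:L} <= \dim (colonv A <<s>>) + size s)%N.
Proof.
elim: s => [|w s IH]; first by rewrite span_nil colonv0 addn0.
rewrite span_cons colonvD /=.
have := dimv_sum_cap (colonv A <[w]>) (colonv A <<s>>).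
have := dimvS (subvf (colonv A <[w]> + colonv A <<s>>)).
have := dimv_colonv_line A w.
lia.
Qed.

Lemma dimv_colonv W : (\dim (colonv A W) + \dim W)%N = \dim {:L}.
Proof.
have := dimv_colonv_span (vbasis W).
rewrite size_tuple (span_basis (vbasisP W)).
have := dimv_colonv_span (vbasis W^C).
rewrite size_tuple (span_basis (vbasisP W^C)) dimv_compl.
have := dimv_sum_cap (colonv A W) (colonv A W^C).
rewrite -colonvD addv_complf colonvf dimv0 addn0.
have := dimvS (subvf (colonv A W + colonv A W^C)).
have := dimvS (subvf W).
lia.
Qed.

End ColonSpace.

Lemma expr_pow_id (R : pzSemiRingType) p k (x : R) :
  x ^+ p = x -> x ^+ (p ^ k) = x.
Proof. by move=> xp; elim: k => [|k IH]; rewrite ?expr1 // expnS exprM xp. Qed.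

Section FrobeniusDifference.

Variables (p : nat) (F : finFieldType) (pcharFp : p \in [pchar F]).
Local Notation L := (pPrimeCharType pcharFp).

Let prime_p : prime p := pcharf_prime pcharFp.

Definition frob_sub k (x : L) : L := x - x ^+ (p ^ k).

Lemma frob_sub_is_linear k : linear (frob_sub k).
Proof.
move=> a u v; rewrite /frob_sub exprDn_pchar; last first.
  by rewrite pnatX pnatE // pcharFp.
have Fp_fixed : a ^+ (p ^ k) = a.
  by apply: expr_pow_id; have := expf_card a; rewrite card_Fp.
by rewrite exprZn Fp_fixed scalerBr opprD addrACA.
Qed.

HB.instance Definition _ k :=
  GRing.isLinear.Build 'F_p L L *:%R (frob_sub k) (frob_sub_is_linear k).

Variable n : nat.
Hypothesis cardF : #|F| = (p ^ (2 * n + 1))%N.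

Lemma dimvf_pchar : \dim {:L} = (2 * n + 1)%N.
Proof. by rewrite pprimeChar_dimf cardF pfactorK. Qed.

Lemma expr_p_fixed (x : F) : x ^+ (p ^ n.+1) = x -> x ^+ p = x.
Proof.
move=> xpn1.
have e : (p ^ (2 * n + 1) * p = p ^ n.+1 * p ^ n.+1)%N.
  by rewrite -expnSr -expnD; congr (_ ^ _)%N; lia.
by rewrite -{1}(expf_card x) cardF -exprM e exprM !xpn1.
Qed.

Lemma lker_frob_sub : lker (linfun (frob_sub n.+1)) = 1%VS.
Proof.
apply/vspaceP => x; rewrite memv_ker lfunE /= /frob_sub subr_eq0.
have -> : (x \in 1%VS) = (x ^+ p == x).
  by rewrite (Fermat's_little_theorem 1%AS) dimv1 expn1 card_Fp.
by apply/eqP/eqP => [/esym/expr_p_fixed | /expr_pow_id ->].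
Qed.

Lemma dimv_limg_frob_sub :
  (\dim (limg (linfun (frob_sub n.+1)))).+1 = \dim {:L}.
Proof.
have := limg_ker_dim (linfun (frob_sub n.+1)) fullv.
by rewrite capfv lker_frob_sub dimv1 add1n.
Qed.

End FrobeniusDifference.

Arguments frob_sub {p F} pcharFp k x.

Lemma mem_scale_set (F : finFieldType) (t x : F) (S : {set F}) :
  t != 0 -> (x \in scale_set t S) = (t^-1 * x \in S).
Proof.
move=> nz_t; apply/imsetP/idP => [[a Sa ->] | Sx]; first by rewrite mulKf.
by exists (t^-1 * x); rewrite ?mulVKf.
Qed.

Section TernaryField.

Variables (F : finFieldType) (h3 : 3%N \in [pchar F]).
Local Notation L := (pPrimeCharType h3).

Lemma F3span_id (S : {set F}) (U : {vspace L}) :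
  (forall x : L, (x \in S) = (x \in U)) -> F3span h3 S = U.
Proof.
move=> SU; apply: subv_anti; apply/andP; split.
  by apply/span_subvP => x; rewrite mem_enum SU.
by apply/subvP => x; rewrite -SU => Sx; apply: memv_span; rewrite mem_enum.
Qed.

Lemma mem_Aset n (x : L) :
  (x \in Aset F n) = (x \in limg (linfun (frob_sub h3 n.+1))).
Proof.
apply/imsetP/memv_imgP => [[a _ ->] | [a _ ->]]; exists a; rewrite ?lfunE //.
exact: memvf.
Qed.

End TernaryField.

Theorem lemma4p2 (n : nat) (F : finFieldType) (h3 : 3%N \in [pchar F])
  (hq : #|F| = (3 ^ (2 * n + 1))%N) (T : {set F}) (hT : 0 \notin T) :
  (\dim (F3span h3 (\bigcap_(t in T) scale_set t (Aset F n)))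
   + \dim (F3span h3 (inv_set T)))%N = (2 * n + 1)%N.
Proof.
have nz_T t : t \in T -> t != 0 by apply: contraTneq => ->.
rewrite -(dimvf_pchar h3 hq).
rewrite -(dimv_colonv (dimv_limg_frob_sub h3 hq) (F3span h3 (inv_set T))).
congr (\dim _ + _)%N; apply: F3span_id => x.
apply/bigcapP/colonv_spanP => [xtA w | xA t tT].
  rewrite mem_enum => /imsetP[t tT ->].
  have := xtA t tT; rewrite mem_scale_set ?nz_T // mem_Aset.
  by rewrite mulrC.
have invT : t^-1 \in enum (inv_set T) by rewrite mem_enum imset_f.
by rewrite mem_scale_set ?nz_T // mem_Aset mulrC (xA _ invT).
Qed.
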